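(* Let $T'$ and $T''$ be canonical subtrees (with respect to a weighted rooted tree $T$ and an integer $k\ge 4$) such that $T''$ is one of the connected components of the forest obtained from $T'$ by deleting the vertices of $C_{T'}$. Let $v$ be a vertex of $T''$. Let $X$ be the set of vertices in $C_{T'}$ that are ancestors of $v$ in $T$, let $x$ be the element of $X$ that is deepest in $T$, and let $x'$ be the child of $x$ that is an ancestor of $v$. Then $x'=rt(T'')$.
   Context: Let $T$ be a rooted tree on $n$ vertices with positive edge weights. Ancestor/descendant refer to $T$, and a vertex counts as its own ancestor and descendant. $T_v$ denotes the subtree of $T$ rooted at $v$. For every non-leaf vertex $v$ of $T$ fix a child $c_1(v)$ with $|T_{c_1(v)}|$ maximal among the children of $v$; the edges $(v,c_1(v))$ are called leftmost. A subtree $R$ of $T$ (connected subgraph) is rooted at its vertex closest to the root of $T$, denoted $rt(R)$, and inherits the leftmost labelling; $R_v$ is the subtree of $R$ rooted at $v$. For $v\in V(R)$, $P_R(v)$ is the longest downward path from $v$ in $R$ using only leftmost edges; its last vertex is $l(v)$, and $l(R):=l(rt(R))$. For an integer $d$, a vertex $v$ of $R$ is $d$-balanced (in $R$) if $|R_{c_1(v)}|\le |R|-d$ (where $|R_{c_1(v)}|=0$ if $c_1(v)$ is undefined or not in $R$). $b_d(v)$ is the first $d$-balanced vertex on $P_R(v)$, or NULL if none. Define $CV(R,d)=\emptyset$ if $b_d(rt(R))$ is NULL, and otherwise, with $b=b_d(rt(R))$, $CV(R,d)=\{b\}\cup\bigcup_{w}CV(R_w,d)$, the union over the children $w$ of $b$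 in $R$. Fix an integer $k\ge 4$. For a subtree $R$ with $m$ vertices, $C_R:=V(R)$ if $k\ge m/2-1$, and otherwise $C_R:=CV(R,m/k)\cup\{l(R),rt(R)\}$. Canonical subtrees: $T$ is canonical; if $R$ is canonical, every connected component of the forest obtained from $R$ by deleting the vertices of $C_R$ (and incident edges) is canonical. *)

From HB Require Import structures.
From mathcomp Require Import all_boot all_order all_algebra.
Set Implicit Arguments.
Unset Strict Implicit.
Unset Printing Implicit Defensive.
Import Order.TTheory GRing.Theory Num.Theory.

(* The edges are the pairs (par c, c) for c <> r. *)

Section Tree.
Variables (V : finType) (par : V -> V) (r : V) (c1 : V -> option V).

Definition is_rooted_tree : Prop :=
  par r = r /\ forall v : V, exists i : nat, iter i par v = r.

Definition anc (u v : V) : bool := [exists i : 'I_#|V|, iter i par v == u].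

Definition depth (v : V) : nat := #|[set u | anc u v]|.-1.

Definition is_child (c v : V) : bool := (par c == v) && (c != r).

Definition subT (v : V) : {set V} := [set u | anc v u].

(* c1 v = Some c: the fixed leftmost child; None iff v is a leaf *)
Definition c1_spec : Prop :=
  forall v : V,
    (c1 v = None <-> forall c, ~~ is_child c v) /\
    (forall c, c1 v = Some c ->
       is_child c v /\ forall c', is_child c' v -> #|subT c'| <= #|subT c|).

Definition adjR (R : {set V}) : rel V :=
  [rel x y | [&& x \in R, y \in R & (is_child x y || is_child y x)]].

Definition component (F S : {set V}) : Prop :=
  exists2 x, x \in F & S = [set y in F | connect (adjR F) x y].

Definition rt (R : {set V}) : V :=
  match [pick x in R] with
  | Some x0 => [arg min_(x < x0 in R) depth x]
  | None => r
  end.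

Definition subR (R : {set V}) (v : V) : {set V} := [set u in R | anc v u].

Definition lnext (R : {set V}) (v : V) : V :=
  match c1 v with Some c => if c \in R then c else v | None => v end.

(* l(v): last vertex of P_R(v) *)
Definition lend (R : {set V}) (v : V) : V := iter #|V| (lnext R) v.
Definition lR (R : {set V}) : V := lend R (rt R).

Definition c1size (R : {set V}) (v : V) : nat :=
  match c1 v with Some c => if c \in R then #|subR R c| else 0 | None => 0 end.

(* d-balanced in R (d rational, to allow d = m/k) *)
Definition balanced (R : {set V}) (d : rat) (v : V) : bool :=
  ((c1size R v)%:R <= (#|R|)%:R - d)%R.

Fixpoint bfind (R : {set V}) (d : rat) (fuel : nat) (v : V) : option V :=
  if balanced R d v then Some v else
  match fuel with
  | 0 => None
  | f.+1 => match c1 v with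
            | Some c => if c \in R then bfind R d f c else None
            | None => None
            end
  end.

(* b_d(v): first d-balanced vertex on P_R(v) *)
Definition bd (R : {set V}) (d : rat) (v : V) : option V := bfind R d #|V| v.

Fixpoint CVf (fuel : nat) (R : {set V}) (d : rat) : {set V} :=
  match fuel with
  | 0 => set0
  | f.+1 =>
    match bd R d (rt R) with
    | None => set0
    | Some b => b |: \bigcup_(w in R | is_child w b) CVf f (subR R w) d
    end
  end.

(* CV(R,d); recursion depth is at most |R| <= |V| *)
Definition CV (R : {set V}) (d : rat) : {set V} := CVf #|V|.+1 R d.

Definition CR (k : nat) (R : {set V}) : {set V} :=
  let m := #|R| in
  if ((m%:R / 2%:R - 1 <= k%:R :> rat))%R then R
  else CV R ((m%:R / k%:R)%R) :|: [set lR R; rt R].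

Inductive canonical (k : nat) : {set V} -> Prop :=
  | can_top : canonical k [set: V]
  | can_step R S : canonical k R -> component (R :\: CR k R) S -> canonical k S.

End Tree.

(* Every vertex on the tree path from x' down to v lies in T' (canonical
   subtrees are closed under taking intermediate vertices of ancestor chains)
   and avoids C_{T'} (a vertex of C_{T'} there would be deeper than x), so this
   path runs inside T' \ C_{T'} and x' belongs to T''.  Conversely, a path of
   the forest T' \ C_{T'} leaving the subtree of x' must use the edge (x, x'),
   which is deleted since x is in C_{T'}; hence T'' lies below x', and x' is
   its vertex closest to the root. *)

From Pilot Require Import Defs.
From mathcomp Require Import all_boot all_order all_algebra.
Set Implicit Arguments.
Unset Strict Implicit.
Unset Printing Implicit Defensive.
Import Order.TTheory GRing.Theory Num.Theory.

Section RootedTree.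
Variables (V : finType) (par : V -> V) (r : V) (c1 : V -> option V).
Hypothesis tree : is_rooted_tree par r.

Local Notation anc := (anc par).
Local Notation depth := (depth par).
Local Notation adjR := (adjR par r).
Local Notation component := (component par r).

Lemma ancP u v : reflect (exists i, iter i par v = u) (anc u v).
Proof.
apply: (iffP existsP) => [[i /eqP <-]|[i <-]]; first by exists i.
have iter_lt : findex par v (iter i par v) < #|V|.
  exact: leq_trans (findex_max (fconnect_iter par i v)) (max_card _).
by exists (Ordinal iter_lt); rewrite /= iter_findex ?fconnect_iter.
Qed.

Lemma anc_refl u : anc u u.
Proof. by apply/ancP; exists 0. Qed.

Lemma anc_par u : anc (par u) u.
Proof. by apply/ancP; exists 1. Qed.

Lemma anc_trans a b c : anc a b -> anc b c -> anc a c.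
Proof. by move=> /ancP[i <-] /ancP[j <-]; apply/ancP; exists (i + j); rewrite iterD. Qed.

Lemma iter_par_root n : iter n par r = r.
Proof. by apply: iter_fix; case: tree. Qed.

Lemma iter_par_fixed_root b p : 0 < p -> iter p par b = b -> b = r.
Proof.
move=> p_gt0 bp; case: tree => _ /(_ b) [h hb].
have <- : iter (h * p) par b = b by rewrite iterM iter_fix.
by rewrite -(subnK (leq_pmulr h p_gt0)) iterD hb iter_par_root.
Qed.

Lemma anc_antisym a b : anc a b -> anc b a -> a = b.
Proof.
move=> /ancP[i ba] /ancP[j ab].
have [/eqP|ij_gt0] := posnP (i + j).
  by rewrite addn_eq0 => /andP[/eqP i0 _]; rewrite -ba i0.
have br : b = r by apply: (iter_par_fixed_root ij_gt0); rewrite addnC iterD ba.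
by rewrite -ba br iter_par_root.
Qed.

Lemma anc_par_neq c y : anc c y -> y != c -> anc c (par y).
Proof.
move=> /ancP[[|i] yc] ync; first by rewrite -yc eqxx in ync.
by apply/ancP; exists i; rewrite -iterSr.
Qed.

Lemma child_not_anc c p : is_child par r c p -> ~~ anc c p.
Proof.
move=> /andP[/eqP <- cr]; apply/negP => /(anc_antisym (anc_par c)) pc.
by move: cr; rewrite (@iter_par_fixed_root c 1) ?eqxx.
Qed.

Lemma anc_depth_eq a b : anc a b -> depth b <= depth a -> a = b.
Proof.
move=> ab; apply: contraTeq => a_neq_b; rewrite -ltnNge.
have ancs_proper : [set u | anc u a] \proper [set u | anc u b].
  apply/properP; split.
    by apply/subsetP => u; rewrite !inE => /anc_trans; apply.
  exists b; rewrite !inE ?anc_refl //.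
  by apply: contraNN a_neq_b => /(anc_antisym ab) ->.
have ancs_a_gt0 : 0 < #|[set u | anc u a]|.
  by apply/card_gt0P; exists a; rewrite inE anc_refl.
rewrite /Defs.depth -ltnS prednK //.
by apply: leq_trans (proper_card ancs_proper) (leqSpred _).
Qed.

Lemma adjR_sym (F : {set V}) : symmetric (adjR F).
Proof. by move=> x y; rewrite /Defs.adjR /= andbCA orbC. Qed.

Lemma connect_anc (F : {set V}) a b :
  anc a b -> (forall c, anc a c -> anc c b -> c \in F) -> connect (adjR F) b a.
Proof.
move=> /ancP[i]; elim: i b => [|i IH] b /= ba betweenF; first by rewrite -ba.
have [-> | b_neq_a] := eqVneq b a; first exact: connect0.
have b_neq_r : b != r.
  by apply: contraNneq b_neq_a => br; rewrite -ba br -iterS iter_par_root.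
have anc_ab : anc a b by apply/ancP; exists i.+1.
have edge : adjR F b (par b).
  rewrite /Defs.adjR /= /is_child eqxx b_neq_r betweenF ?anc_refl //=.
  by rewrite betweenF // ?anc_par_neq ?anc_par.
apply: connect_trans (connect1 edge) (IH _ _ _); first by rewrite -iterSr.
by move=> c ac /anc_trans cb; apply/betweenF/cb/anc_par.
Qed.

Lemma connect_exit_subtree (F : {set V}) c b y :
  anc c b -> ~~ anc c y -> connect (adjR F) b y ->
  [/\ c \in F, par c \in F & connect (adjR F) b c].
Proof.
move=> cb cy /connectP[s]; elim: s b cb => [|z s IH] b cb /=.
  by move=> _ yb; rewrite yb cb in cy.
move=> /andP[bz zs] ylast; have /and3P[bF zF bz_child] := bz.
have [cz|cz] := boolP (anc c z).
  have [cF pcF zc] := IH z cz zs ylast.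
  by split=> //; apply: connect_trans (connect1 bz) zc.
case/orP: bz_child => [/andP[/eqP pb_z _] | /andP[/eqP pz_b _]].
  have [<-|bc] := eqVneq b c; first by rewrite -pb_z in zF; split; rewrite // connect0.
  by rewrite -pb_z (anc_par_neq cb bc) in cz.
by move: cz; rewrite (anc_trans _ (anc_par z)) // pz_b.
Qed.

Lemma component_sub (F S : {set V}) : component F S -> S \subset F.
Proof. by case=> z _ ->; apply/subsetP => y; rewrite inE => /andP[]. Qed.

Lemma component_connect (F S : {set V}) a b :
  component F S -> a \in S -> b \in F -> connect (adjR F) a b -> b \in S.
Proof.
case=> z _ ->; rewrite !inE => /andP[_ za] bF ab.
by rewrite bF (connect_trans za ab).
Qed.

Lemma component_connected (F S : {set V}) a b :
  component F S -> a \in S -> b \in S -> connect (adjR F) a b.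
Proof.
case=> z _ ->; rewrite !inE => /andP[_ za] /andP[_ zb].
by rewrite (sym_connect_sym (adjR_sym F)) in za; apply: connect_trans za zb.
Qed.

Lemma component_convex (F S : {set V}) a b c :
  component F S -> a \in S -> b \in S -> anc a c -> anc c b -> c \in S.
Proof.
move=> compS aS bS ac cb; have [-> //|c_neq_a] := eqVneq c a.
have ca : ~~ anc c a by apply: contraNN c_neq_a => /(anc_antisym ac) ->.
have [cF _ bc] := connect_exit_subtree cb ca (component_connected compS bS aS).
exact: component_connect compS bS cF bc.
Qed.

Lemma rt_in (R : {set V}) : R != set0 -> rt par r R \in R.
Proof.
rewrite /rt; case: pickP => [x0 x0R _|R0 /set0Pn[y yR]]; last by rewrite R0 in yR.
by case: arg_minnP.
Qed.

Lemma rt_depth_min (R : {set V}) y : y \in R -> depth (rt par r R) <= depth y.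
Proof.
rewrite /rt; case: pickP => [x0 x0R yR|R0 yR]; last by rewrite R0 in yR.
by case: arg_minnP => // m _; apply.
Qed.

Lemma rt_anc_all (R : {set V}) a :
  a \in R -> (forall y, y \in R -> anc a y) -> rt par r R = a.
Proof.
move=> aR a_anc_all.
have rtR : rt par r R \in R by apply: rt_in; apply/set0Pn; exists a.
by apply/esym/anc_depth_eq; [apply: a_anc_all | apply: rt_depth_min].
Qed.

Lemma component_rt (F S : {set V}) a :
  component F S -> a \in S -> par a \notin F -> rt par r S = a.
Proof.
move=> compS aS paF; apply: rt_anc_all => // y yS; apply: contraNT paF => ay.
by have [] := connect_exit_subtree (anc_refl a) ay (component_connected compS aS yS).
Qed.

Lemma canonical_convex k (T : {set V}) a b c :
  canonical par r c1 k T -> a \in T -> b \in T -> anc a c -> anc c b -> c \in T.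
Proof. by case=> [|R S _ compS]; [rewrite inE | apply: component_convex compS]. Qed.

Lemma lend_in (R : {set V}) v : v \in R -> lend c1 R v \in R.
Proof.
rewrite /lend; elim: #|V| => //= n IH /IH.
by rewrite /lnext; case: (c1 _) => // c; case: ifP.
Qed.

Lemma bfind_in (R : {set V}) d n v b :
  v \in R -> bfind par c1 R d n v = Some b -> b \in R.
Proof.
elim: n v => [|n IH] v vR /=; case: ifP => [_ [<-] // | _] //.
by case: (c1 v) => // c; case: ifP => // cR; apply: IH.
Qed.

Lemma CVf_sub n (R : {set V}) d : R != set0 -> CVf par r c1 n R d \subset R.
Proof.
elim: n R => [|n IH] R R_neq0 /=; first exact: sub0set.
case bR: (bd par c1 R d (rt par r R)) => [b|]; last exact: sub0set.
apply/subsetP => y; rewrite in_setU1 => /orP[/eqP -> | /bigcupP[w /andP[wR _] yCV]].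
  exact: bfind_in (rt_in R_neq0) bR.
have subRw_neq0 : subR par R w != set0.
  by apply/set0Pn; exists w; rewrite inE wR anc_refl.
by have := subsetP (IH _ subRw_neq0) y yCV; rewrite inE => /andP[].
Qed.

Lemma CR_sub k (R : {set V}) : CR par r c1 k R \subset R.
Proof.
have [-> | R_neq0] := eqVneq R set0.
  by rewrite /CR cards0 mul0r sub0r (le_trans (lerN10 _)) ?ler0n.
rewrite /CR; case: ifP => _; first exact: subxx.
apply/subsetP => y; rewrite !inE => /orP[/(subsetP (CVf_sub _ _ R_neq0)) //|].
by case/orP=> /eqP ->; [apply: lend_in|]; apply: rt_in.
Qed.

End RootedTree.

Theorem lemma4 (V : finType) (par : V -> V) (r : V) (c1 : V -> option V)
    (w : V -> rat) (k : nat) (T' T'' : {set V}) (v x x' : V) :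
  is_rooted_tree par r ->
  (forall u, u != r -> (0 < w u)%R) ->
  c1_spec par r c1 ->
  4 <= k ->
  canonical par r c1 k T' ->
  canonical par r c1 k T'' ->
  component par r (T' :\: CR par r c1 k T') T'' ->
  v \in T'' ->
  x \in CR par r c1 k T' -> anc par x v ->
  (forall y, y \in CR par r c1 k T' -> anc par y v -> depth par y <= depth par x) ->
  is_child par r x' x -> anc par x' v ->
  x' = rt par r T''.
Proof.
move=> tree _ _ _ canT' _ compT'' vT'' xC _ x_deepest x'x x'v.
set C := CR par r c1 k T' in compT'' xC x_deepest.
have x'_x : par x' = x by case/andP: x'x => /eqP.
have xx' : anc par x x' by rewrite -x'_x anc_par.
have vT' : v \in T' by have := subsetP (component_sub compT'') v vT''; rewrite inE => /andP[].
have xT' : x \in T' := subsetP (CR_sub par r c1 k T') x xC.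
have x'v_path : forall c, anc par x' c -> anc par c v -> c \in T' :\: C.
  move=> c x'c cv; have xc := anc_trans xx' x'c.
  rewrite inE (canonical_convex tree canT' xT' vT' xc cv) andbT.
  apply: contraNN (child_not_anc tree x'x) => cC.
  by rewrite (anc_depth_eq tree xc (x_deepest c cC cv)).
have x'T'' : x' \in T''.
  apply: component_connect compT'' vT'' (x'v_path _ (anc_refl par x') x'v) _.
  exact: (connect_anc tree x'v x'v_path).
by apply/esym/(component_rt tree compT'' x'T''); rewrite x'_x inE xC.
Qed.
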